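(* Let $(\mathfrak g,[\cdot,\cdot]_{\mathfrak g},E)$ be an ENL algebra and let $r\in\mathfrak g\otimes\mathfrak g$ be an EN $r$-matrix, i.e. $[\![r,r]\!]=0$ and $(\mathrm{Id}\otimes E-E\otimes\mathrm{Id})(r)=0$. Assume moreover that $(\mathrm{ad}_x\otimes\mathrm{Id}+\mathrm{Id}\otimes\mathrm{ad}_x)(r+r^{21})=0$ for all $x\in\mathfrak g$. Then the cobracket $\Delta_r(x)=(\mathrm{ad}_x\otimes\mathrm{Id}+\mathrm{Id}\otimes\mathrm{ad}_x)(r)$ endows $\mathfrak g$ with a coboundary ENL bialgebra structure: $(\mathfrak g,\Delta_r)$ is a Lie bialgebra and $\Delta_r\circ E=(E\otimes\mathrm{Id})\circ\Delta_r$ (equivalently, $E^*$ is an equivariant Nijenhuis operator on the Lie algebra $\mathfrak g^*$ whose bracket is dual to $\Delta_r$).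
   Context: All vector spaces are finite-dimensional over an algebraically closed field of characteristic zero. An ENL algebra is a Lie algebra with linear $E$ such that $E[x,y]=[x,Ey]$ for all $x,y$. For $r=\sum_i a_i\otimes b_i\in\mathfrak g\otimes\mathfrak g$, $r^{21}=\sum_i b_i\otimes a_i$, and $[\![r,r]\!]=[r_{12},r_{13}]+[r_{13},r_{23}]+[r_{12},r_{23}]$ computed in $U(\mathfrak g)^{\otimes3}$ with $r_{12}=\sum a_i\otimes b_i\otimes1$, $r_{13}=\sum a_i\otimes1\otimes b_i$, $r_{23}=\sum1\otimes a_i\otimes b_i$. A Lie bialgebra $(\mathfrak g,\Delta)$ is a Lie algebra with a coantisymmetric map $\Delta:\mathfrak g\to\mathfrak g\otimes\mathfrak g$ satisfying the co-Jacobi identity (so that the dual bracket $\langle[\alpha,\beta]_{\mathfrak g^*},x\rangle=\langle\alpha\otimes\beta,\Delta(x)\rangle$ is a Lie bracket on $\mathfrak g^*$) and the 1-cocycle condition $\Delta([x,y])=(\mathrm{ad}_x\otimes\mathrm{Id}+\mathrm{Id}\otimes\mathrm{ad}_x)\Delta(y)-(\mathrm{ad}_y\otimes\mathrm{Id}+\mathrm{Id}\otimes\mathrm{ad}_y)\Delta(x)$. An ENL bialgebra $(\mathfrak g,\Delta,E)$ is a Lie bialgebra such that $(\mathfrak g,E)$ and $(\mathfrak g^*,E^* )$ are ENL algebras; it is coboundary if $\Delta=\Delta_r$ for some $r\in\mathfrak g\otimes\mathfrak g$. *)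

(* Finite-dimensional Lie algebra g = K^n in coordinates
   w.r.t. a fixed basis e_0..e_{n-1}; elements of g are row vectors 'rV[K]_n,
   linear maps act on the right (x |-> x *m A), and a tensor
   T = \sum_{i,j} T i j e_i (x) e_j of g (x) g is stored as the matrix T. *)
From HB Require Import structures.
From mathcomp Require Import all_boot all_order all_algebra.
Set Implicit Arguments. Unset Strict Implicit. Unset Printing Implicit Defensive.
Import Order.TTheory GRing.Theory.
Local Open Scope ring_scope.

Section Defs.
Variables (K : fieldType) (n : nat).

(* bracket given by structure constants: [e_i, e_j] = \sum_k c i j k e_k *)
Definition lbr (c : 'I_n -> 'I_n -> 'I_n -> K) (x y : 'rV[K]_n) : 'rV[K]_n :=
  \row_k \sum_i \sum_j x 0 i * y 0 j * c i j k.

(* b is a Lie bracket: bilinear (left linear + antisymmetric), antisymmetric,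
   Jacobi *)
Definition is_lie_bracket (b : 'rV[K]_n -> 'rV[K]_n -> 'rV[K]_n) : Prop :=
  [/\ (forall a x y z, b (a *: x + y) z = a *: b x z + b y z),
      (forall x y, b x y = - b y x) &
      (forall x y z, b x (b y z) + b y (b z x) + b z (b x y) = 0)].

Definition is_ENL (b : 'rV[K]_n -> 'rV[K]_n -> 'rV[K]_n) (E : 'M[K]_n) : Prop :=
  forall x y, b x y *m E = b x (y *m E).

(* matrix of ad_x : y |-> [x,y]  (so that  y *m adm c x = lbr c x y) *)
Definition adm (c : 'I_n -> 'I_n -> 'I_n -> K) (x : 'rV[K]_n) : 'M[K]_n :=
  \matrix_(j, k) \sum_i x 0 i * c i j k.

(* (A (x) B)(T) *)
Definition tmap (A B T : 'M[K]_n) : 'M[K]_n := A^T *m T *m B.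

Definition cob (c : 'I_n -> 'I_n -> 'I_n -> K) (R : 'M[K]_n) (x : 'rV[K]_n)
  : 'M[K]_n := tmap (adm c x) 1 R + tmap 1 (adm c x) R.

(* [[r,r]] = [r12,r13] + [r13,r23] + [r12,r23], which lies in g(x)g(x)g:
   [r12,r13] = \sum [a_i,a_j] (x) b_i (x) b_j,
   [r13,r23] = \sum a_i (x) a_j (x) [b_i,b_j],
   [r12,r23] = \sum a_i (x) [b_i,a_j] (x) b_j;
   coefficient of e_a (x) e_b (x) e_d : *)
Definition CYB (c : 'I_n -> 'I_n -> 'I_n -> K) (R : 'M[K]_n)
  (a b d : 'I_n) : K :=
    \sum_p \sum_s R p b * R s d * c p s a
  + \sum_q \sum_t R a q * R b t * c q t d
  + \sum_q \sum_s R a q * R s d * c q s b.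

(* dual bracket on g^* (dual basis coordinates, pairing <alpha,x> = alpha x^T):
   <[alpha,beta], e_k> = <alpha (x) beta, Delta(e_k)> *)
Definition dbr (D : 'rV[K]_n -> 'M[K]_n) (al be : 'rV[K]_n) : 'rV[K]_n :=
  \row_k (al *m D (delta_mx 0 k) *m be^T) 0 0.

Definition is_lie_bialgebra (c : 'I_n -> 'I_n -> 'I_n -> K)
  (D : 'rV[K]_n -> 'M[K]_n) : Prop :=
  [/\ is_lie_bracket (lbr c),
      (forall a x y, D (a *: x + y) = a *: D x + D y),
      (forall x, (D x)^T = - D x),
      is_lie_bracket (dbr D) &
      (forall x y, D (lbr c x y) =
          tmap (adm c x) 1 (D y) + tmap 1 (adm c x) (D y)
        - (tmap (adm c y) 1 (D x) + tmap 1 (adm c y) (D x)))].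

(* ENL bialgebra: Lie bialgebra with (g,E) and (g^*,E^* ) ENL algebras;
   E^* alpha = alpha *m E^T in dual coordinates *)
Definition is_ENL_bialgebra (c : 'I_n -> 'I_n -> 'I_n -> K)
  (D : 'rV[K]_n -> 'M[K]_n) (E : 'M[K]_n) : Prop :=
  [/\ is_lie_bialgebra c D, is_ENL (lbr c) E & is_ENL (dbr D) E^T].

End Defs.

From HB Require Import structures.
From mathcomp Require Import all_boot all_order all_algebra.
From mathcomp Require Import ring.
Import Order.TTheory GRing.Theory.
Local Open Scope ring_scope.

(* Pair g^* (row vectors) with g by [dot] and let [coad] be the coadjoint
   action.  Then the bracket dual to Delta_r is
   [rbr a b = ad*_(r^t b) a + ad*_(r a) b], where r a = a R.  Invariance of
   S = r + r^21 makes a |-> a S equivariant, which gives the swap identity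
   ad*_(S b) a = - ad*_(S a) b, i.e. antisymmetry of [rbr].  The classical
   Yang-Baxter equation says that a |-> a R is a homomorphism
   (g^*, rbr) -> g; with invariance, a |-> a R^t is an anti-homomorphism.
   Using these two facts the Jacobiator of [rbr] collapses to one instance of
   the swap identity.  Every coboundary is a 1-cocycle, and E-equivariance of
   Delta_r comes from E ad_x = ad_x E, ad_(E x) = ad_x E and
   (E (x) 1) r = (1 (x) E) r. *)

Section RowVectors.
Context {K : fieldType} {n : nat}.
Implicit Types (u v w : 'rV[K]_n).

Definition dot u v : K := (u *m v^T) 0 0.

Lemma dotC u v : dot u v = dot v u.
Proof. by rewrite /dot -[v *m u^T]trmxK trmx_mul trmxK [RHS]mxE. Qed.

Lemma dotDl u v w : dot (u + v) w = dot u w + dot v w.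
Proof. by rewrite /dot mulmxDl mxE. Qed.

Lemma dotNl u w : dot (- u) w = - dot u w.
Proof. by rewrite /dot mulNmx mxE. Qed.

Lemma dot_mulmxl u (M : 'M[K]_n) v : dot (u *m M) v = dot u (v *m M^T).
Proof. by rewrite /dot trmx_mul trmxK mulmxA. Qed.

Lemma dot_delta u k : dot u (delta_mx 0 k) = u 0 k.
Proof. by rewrite /dot trmx_delta -colE mxE. Qed.

Lemma row_dotP u v : (forall w, dot u w = dot v w) -> u = v.
Proof. by move=> uv; apply/rowP => k; rewrite -!dot_delta uv. Qed.

Lemma linear_row_eq0 {V : lmodType K} {f : 'rV[K]_n -> V} :
  linear f -> (forall i, f (delta_mx 0 i) = 0) -> forall u, f u = 0.
Proof.
move=> f_lin f_basis u; rewrite (row_sum_delta u).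
elim/big_rec: _ => [|i v _ fv]; last by rewrite f_lin f_basis fv scaler0 addr0.
by have := f_lin 1 0 0; rewrite !scale1r addr0 -{1}[f 0]addr0 => /addrI.
Qed.

End RowVectors.

Section LieAlgebra.
Context {K : fieldType} {n : nat}.
Variable c : 'I_n -> 'I_n -> 'I_n -> K.
Local Notation br := (lbr c).
Local Notation ad := (adm c).
Implicit Types (x y z u v al be ga : 'rV[K]_n) (T : 'M[K]_n).

Lemma mulmx_adm x y : y *m ad x = br x y.
Proof.
apply/rowP => k; rewrite !mxE.
under eq_bigr => j _ do rewrite mxE big_distrr /=.
rewrite exchange_big /=; apply: eq_bigr => i _; apply: eq_bigr => j _.
by rewrite mulrA [y 0 j * _]mulrC.
Qed.

Lemma adm_is_linear : linear ad.
Proof.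
move=> a x y; apply/matrixP => j k; rewrite !mxE big_distrr -big_split /=.
by apply: eq_bigr => i _; rewrite !mxE mulrDl mulrA.
Qed.
HB.instance Definition _ := GRing.isLinear.Build K 'rV[K]_n 'M[K]_n _ ad
  adm_is_linear.

Lemma lbr_linearl z : linear (br^~ z).
Proof. by move=> a x y; rewrite -!mulmx_adm linearP mulmxDr scalemxAr. Qed.

Lemma lbr_linearr z : linear (br z).
Proof. by move=> a x y; rewrite -!mulmx_adm mulmxDl scalemxAl. Qed.
HB.instance Definition _ z := GRing.isLinear.Build K 'rV[K]_n 'rV[K]_n _ (br z)
  (lbr_linearr z).

(* Locked so that ring rewrite rules cannot see through the negation. *)
Definition coad x : 'M[K]_n := locked (- (ad x)^T).

Lemma coadE x : coad x = - (ad x)^T.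
Proof. by rewrite /coad -lock. Qed.

Lemma coad_is_linear : linear coad.
Proof. by move=> a x y; rewrite !coadE linearP linearD linearZ /= opprD scalerN. Qed.
HB.instance Definition _ := GRing.isLinear.Build K 'rV[K]_n 'M[K]_n _ coad
  coad_is_linear.

Definition ad_tensor x T := tmap (ad x) 1 T + tmap 1 (ad x) T.

Lemma ad_tensorE x T : ad_tensor x T = (ad x)^T *m T + T *m ad x.
Proof. by rewrite /ad_tensor /tmap trmx1 mulmx1 mul1mx. Qed.

Lemma trmx_ad_tensor x T : (ad_tensor x T)^T = ad_tensor x T^T.
Proof. by rewrite !ad_tensorE linearD /= !trmx_mul trmxK addrC. Qed.

Hypothesis br_lie : is_lie_bracket br.

Lemma lbr_antisym x y : br x y = - br y x.
Proof. by case: br_lie. Qed.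

Lemma adm_lbr x y : ad (br x y) = ad y *m ad x - ad x *m ad y.
Proof.
apply/row_matrixP => i; rewrite !rowE mulmxBr !mulmxA !mulmx_adm.
case: br_lie => _ _ /(_ x y (delta_mx 0 i)) /eqP; rewrite addrC addr_eq0 => /eqP.
rewrite (lbr_antisym (br x y)) => ->.
by rewrite opprK (lbr_antisym _ x) -[br y (- _)]mulmx_adm mulNmx mulmx_adm.
Qed.

Lemma dot_coad al u x : dot (al *m coad u) x = dot al (br x u).
Proof.
by rewrite dot_mulmxl coadE linearN /= trmxK mulmxN mulmx_adm -lbr_antisym.
Qed.

Lemma coad_lbr u v : coad (br u v) = coad v *m coad u - coad u *m coad v.
Proof.
by rewrite !coadE adm_lbr linearB /= !trmx_mul !(mulNmx, mulmxN, opprK) opprB.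
Qed.

Lemma ad_tensor_lbr x y T :
  ad_tensor (br x y) T = ad_tensor x (ad_tensor y T) - ad_tensor y (ad_tensor x T).
Proof.
rewrite !ad_tensorE adm_lbr linearB /= !trmx_mul.
rewrite !(mulmxDl, mulmxDr, mulmxBl, mulmxBr, mulNmx, mulmxN) !mulmxA.
by apply/matrixP => i j; rewrite !mxE; ring.
Qed.

Section Coboundary.
Variable R : 'M[K]_n.
Local Notation S := (R + R^T).
Local Notation cob := (cob c R).

Lemma cobE x : cob x = (ad x)^T *m R + R *m ad x.
Proof. exact: ad_tensorE. Qed.

Lemma cob_linear : linear cob.
Proof.
move=> a x y; rewrite !cobE linearP linearP /= mulmxDl mulmxDr -scalemxAl -scalemxAr.
by rewrite scalerDr addrACA.
Qed.

Lemma cob_lbr x y : cob (br x y) = ad_tensor x (cob y) - ad_tensor y (cob x).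
Proof. exact: ad_tensor_lbr. Qed.

Hypothesis S_invariant : forall x, ad_tensor x S = 0.

Lemma trmx_cob x : (cob x)^T = - cob x.
Proof.
apply/eqP; rewrite -addr_eq0 addrC -[cob x]/(ad_tensor x R) trmx_ad_tensor.
by rewrite -(S_invariant x) !ad_tensorE mulmxDr mulmxDl addrACA.
Qed.

Lemma coad_S x : coad x *m S = S *m ad x.
Proof.
have := S_invariant x; rewrite ad_tensorE => /eqP; rewrite addr_eq0 => /eqP Sx.
by rewrite coadE mulNmx Sx opprK.
Qed.

Lemma coad_S_swap al be : al *m coad (be *m S) = - (be *m coad (al *m S)).
Proof.
have trmx_S : S^T = S by rewrite linearD /= trmxK addrC.
apply: row_dotP => x; rewrite dotNl !dot_coad -mulmx_adm -mulmxA -coad_S mulmxA.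
by rewrite dotC dot_mulmxl trmx_S dot_coad lbr_antisym dotC dotNl dotC.
Qed.

Definition rbr al be := al *m coad (be *m R^T) + be *m coad (al *m R).

Lemma dot_rbr al be x : dot (rbr al be) x = dot (al *m cob x) be.
Proof.
rewrite cobE mulmxDr !mulmxA !dotDl !dot_coad dot_mulmxl; congr (_ + _).
  by rewrite dot_mulmxl trmxK mulmx_adm.
by rewrite mulmx_adm dotC.
Qed.

Lemma dbr_cobE al be : dbr cob al be = rbr al be.
Proof. by apply/rowP => k; rewrite mxE -[RHS]dot_delta dot_rbr. Qed.

Lemma rbr_linearl be : linear (rbr^~ be).
Proof.
move=> a x y; rewrite /rbr !mulmxDl -!scalemxAl linearD linearZ /= mulmxDr -scalemxAr.
by rewrite scalerDr addrACA.
Qed.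

Lemma rbr_linearr al : linear (rbr al).
Proof.
move=> a x y; rewrite /rbr !mulmxDl -!scalemxAl linearD linearZ /= mulmxDr -scalemxAr.
by rewrite scalerDr addrACA.
Qed.
HB.instance Definition _ al := GRing.isLinear.Build K 'rV[K]_n 'rV[K]_n _ (rbr al)
  (rbr_linearr al).

Lemma rbr_antisym al be : rbr al be = - rbr be al.
Proof.
apply/eqP; rewrite -addr_eq0 /rbr [be *m _ + _]addrC addrACA -!mulmxDr -!linearD /=.
by rewrite [R^T + R]addrC coad_S_swap addNr.
Qed.

Lemma CYB_rbr i j d :
  CYB c R i j d = (br ('e_i *m R) ('e_j *m R) - rbr 'e_i 'e_j *m R) 0 d.
Proof.
rewrite [RHS]mxE [X in _ = _ + X]mxE -[(rbr _ _ *m R) 0 d]dot_delta.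
rewrite dot_mulmxl /rbr dotDl !dot_coad.
rewrite !(lbr_antisym ('e_d *m R^T)) !(dotC (delta_mx 0 _)) !dotNl !dot_delta.
rewrite opprD !opprK addrCA addrA /CYB -!rowE.
by congr (_ + _ + _); rewrite mxE; apply: eq_bigr => p _; apply: eq_bigr => s _;
  rewrite !mxE.
Qed.

Hypothesis CYB_eq0 : forall i j d, CYB c R i j d = 0.

Lemma rbr_mulmxR al be : rbr al be *m R = br (al *m R) (be *m R).
Proof.
pose defect al be := br (al *m R) (be *m R) - rbr al be *m R.
suff : defect al be = 0 by move/eqP; rewrite subr_eq0 => /eqP.
have defect_linl x : linear (defect^~ x).
  move=> a y z; rewrite /defect rbr_linearl mulmxDl (mulmxDl (a *: rbr y x)).
  by rewrite -!scalemxAl lbr_linearl opprD addrACA scalerBr.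
have defect_linr x : linear (defect x).
  move=> a y z; rewrite /defect linearP /= mulmxDl (mulmxDl (a *: rbr x y)).
  by rewrite -!scalemxAl lbr_linearr opprD addrACA scalerBr.
apply: (linear_row_eq0 (defect_linl be)) => i; move: be.
apply: (linear_row_eq0 (defect_linr _)) => j.
by apply/rowP => d; rewrite -CYB_rbr CYB_eq0 mxE.
Qed.

Lemma rbr_mulmxRT al be : rbr al be *m R^T = br (be *m R^T) (al *m R^T).
Proof.
have RT : R^T = S - R by rewrite [R + _]addrC addrK.
rewrite {1}RT mulmxBr rbr_mulmxR mulmxDl -!mulmxA !coad_S !mulmxA !mulmx_adm.
rewrite -addrA -linearB /= -mulmxBr -RT (lbr_antisym (al *m R)).
by rewrite -linearB /= -mulmxBr -RT.
Qed.

Lemma rbr_rbrr al be ga : rbr al (rbr be ga) =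
  al *m coad (br (ga *m R^T) (be *m R^T)) + rbr be ga *m coad (al *m R).
Proof. by rewrite {1}/rbr rbr_mulmxRT. Qed.

Lemma rbr_rbrl al be ga : rbr (rbr al be) ga =
  rbr al be *m coad (ga *m R^T) + ga *m coad (br (al *m R) (be *m R)).
Proof. by rewrite {1}/rbr rbr_mulmxR. Qed.

Lemma rbr_leibniz al be ga :
  rbr al (rbr be ga) = rbr (rbr al be) ga + rbr be (rbr al ga).
Proof.
(* Once both sides are expanded, the Leibniz defect is [- key]. *)
have key : al *m coad (ga *m R^T) *m coad (be *m S)
           + be *m coad (br (ga *m R^T) (al *m S)) = 0.
  by rewrite coad_S_swap -(mulmxA al) coad_S mulmxA mulmx_adm addNr.
apply/eqP; rewrite -subr_eq0 -oppr_eq0 -key; apply/eqP.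
rewrite rbr_rbrr !rbr_rbrl rbr_rbrr /rbr !coad_lbr.
have coadS x : coad (x *m S) = coad (x *m R) + coad (x *m R^T).
  by rewrite mulmxDr linearD.
rewrite !coadS !(mulmxDr, mulmxDl, mulmxN) !mulmxA.
by apply: row_dotP => x; rewrite !(dotDl, dotNl); ring.
Qed.

Lemma rbr_jacobi x y z : rbr x (rbr y z) + rbr y (rbr z x) + rbr z (rbr x y) = 0.
Proof.
rewrite rbr_leibniz (rbr_antisym z x) (rbr_antisym z (rbr x y)) linearN /=.
by rewrite addrK subrr.
Qed.

Lemma dbr_cob_lie : is_lie_bracket (dbr cob).
Proof.
split=> [a x y z | x y | x y z]; rewrite !dbr_cobE.
- exact: rbr_linearl.
- exact: rbr_antisym.
- exact: rbr_jacobi.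
Qed.

Section EquivariantNijenhuis.
Variable E : 'M[K]_n.
Hypothesis E_ENL : is_ENL br E.
Hypothesis R_E : R *m E = E^T *m R.

Lemma adm_comm x : ad x *m E = E *m ad x.
Proof. by apply/row_matrixP => i; rewrite !rowE !mulmxA !mulmx_adm E_ENL. Qed.

Lemma adm_mulmxE x : ad (x *m E) = ad x *m E.
Proof.
apply/row_matrixP => i; rewrite !rowE mulmxA !mulmx_adm lbr_antisym -E_ENL.
by rewrite -mulNmx -lbr_antisym.
Qed.

Lemma cob_mulmxE x : cob (x *m E) = E^T *m cob x.
Proof.
rewrite !cobE adm_mulmxE trmx_mul mulmxDr !mulmxA -R_E -!mulmxA.
by rewrite adm_comm.
Qed.

Lemma mulmx_cobE x : cob x *m E = cob (x *m E).
Proof.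
rewrite !cobE adm_mulmxE mulmxDl -!mulmxA R_E mulmxA -trmx_mul -adm_comm.
by rewrite mulmxA.
Qed.

Lemma dbr_cob_ENL : is_ENL (dbr cob) E^T.
Proof.
move=> al be; rewrite !dbr_cobE; apply: row_dotP => x.
by rewrite dot_mulmxl trmxK !dot_rbr -mulmx_cobE mulmxA dot_mulmxl.
Qed.

End EquivariantNijenhuis.
End Coboundary.
End LieAlgebra.

Theorem theorem5p6 (K : closedFieldType) (hK : [pchar K] =i pred0) (n : nat)
  (c : 'I_n -> 'I_n -> 'I_n -> K) (E : 'M[K]_n) (R : 'M[K]_n)
  (hlie : is_lie_bracket (lbr c))
  (hENL : is_ENL (lbr c) E)
  (hCYB : forall a b d, CYB c R a b d = 0)
  (hE : tmap 1 E R - tmap E 1 R = 0)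
  (hinv : forall x, tmap (adm c x) 1 (R + R^T) + tmap 1 (adm c x) (R + R^T) = 0) :
  is_ENL_bialgebra c (cob c R) E /\
  (forall x, cob c R (x *m E) = tmap E 1 (cob c R x)).
Proof.
have R_E : R *m E = E^T *m R.
  by apply/eqP; rewrite -subr_eq0; move/eqP: hE; rewrite /tmap trmx1 mulmx1 mul1mx.
split; last by move=> x; rewrite cob_mulmxE // /tmap mulmx1.
split; [split | exact: hENL | exact: dbr_cob_ENL].
- exact: hlie.
- exact: cob_linear.
- exact: trmx_cob.
- exact: dbr_cob_lie.
- exact: cob_lbr.
Qed.
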